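(* Let $q$ be an odd prime power, let $d\in\mathbb{N}$ be even with $d\mid(q-1)$ and $(q-1)/d$ odd. Let $h\in\mathbb{F}_q[x]$, $T(x)=x^{(q-1)/d}$ and $f(x)=x^2h(T(x))$. If $f$ is a permutation polynomial of $\mathbb{F}_q$, then $\delta_f\le 2d^2-\tfrac{3}{2}d$.
   Context: A polynomial $f\in\mathbb{F}_q[x]$ is a permutation polynomial of $\mathbb{F}_q$ if $c\mapsto f(c)$ is a bijection of $\mathbb{F}_q$. For $a\in\mathbb{F}_q^*$, $\Delta_{f,a}(x)=f(x+a)-f(x)$, and the differential uniformity is $\delta_f=\max_{a\in\mathbb{F}_q^*,\,c\in\mathbb{F}_q}|\{x\in\mathbb{F}_q:\Delta_{f,a}(x)=c\}|$. *)

From mathcomp Require Import all_boot all_order all_algebra all_field.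
Set Implicit Arguments. Unset Strict Implicit. Unset Printing Implicit Defensive.
Import GRing.Theory.
Local Open Scope ring_scope.

Definition is_perm_poly (F : finFieldType) (f : {poly F}) : Prop :=
  injective (fun c : F => f.[c]).

Definition diff_count (F : finFieldType) (f : {poly F}) (a c : F) : nat :=
  #|[set x : F | f.[x + a] - f.[x] == c]|.

Definition diff_unif (F : finFieldType) (f : {poly F}) : nat :=
  \max_(a : F | a != 0) \max_(c : F) diff_count f a c.

From mathcomp Require Import all_boot all_order all_algebra all_field.
From mathcomp Require pgroup abelian.
From mathcomp Require Import ring zify.
Set Implicit Arguments. Unset Strict Implicit. Unset Printing Implicit Defensive.
Import GRing.Theory.
Local Open Scope ring_scope.

(* Write m = (q-1)/d.  For x outside {0, -a} put e1 = (x+a)^m and e2 = x^m;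
   both lie in the image mu of x |-> x^m on F^*, a set of at most d roots of
   unity, closed under negation because m is odd.  On the fiber where
   ((x+a)^m, x^m) = (e1, e2) the equation f(x+a) - f(x) = c reads
   h(e1) (x+a)^2 - h(e2) x^2 = c, a quadratic with linear coefficient
   2 a h(e1) <> 0, so every fiber has at most two solutions, and diagonal
   fibers at most one.  This already gives about 2 d^2.  The saving comes from
   the block of the four fibers over {e, -e}^2: two solutions on each of the
   fibers (e, -e) and (-e, e) force, through their Vieta relations, an identity
   whose m-th power reads e^3 = -e^3, so the diagonal fibers are then empty and
   a block carries at most 5 solutions.  The possible solutions 0 and -a fix c
   and eat into the block of a^m.  Summing, the number N of solutions satisfies
   2 N <= 4 k^2 - 3 k with k = #|mu| <= d. *)

Lemma odd_card_two_neq0 (F : finFieldType) : odd #|F| -> (2 : F) != 0.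
Proof.
move=> oddF; apply/negP => /eqP two0.
have pchar2 : (2%N \in [pchar F]) by rewrite inE /= two0 eqxx.
have := abelian.abelem_pgroup (abelian.fin_ring_pchar_abelem pchar2).
rewrite /pgroup.pgroup cardsT => /p_natP [n cardF].
move: oddF (card_finNzRing_gt1 F); rewrite cardF.
by case: n {cardF} => [|n] //=; rewrite expnS oddM.
Qed.

Lemma exprN_odd (R : pzRingType) (n : nat) (x : R) : odd n -> (- x) ^+ n = - x ^+ n.
Proof. by move=> odd_n; rewrite exprNn -signr_odd odd_n expr1 mulN1r. Qed.

Lemma card_bigcup_le (I T : finType) (P : pred I) (A : I -> {set T}) :
  (#|\bigcup_(i | P i) A i| <= \sum_(i | P i) #|A i|)%N.
Proof.
elim/big_ind2: _ => [|n1 B1 n2 B2 le1 le2|//]; first by rewrite cards0.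
exact: leq_trans (leq_card_setU B1 B2) (leq_add le1 le2).
Qed.

Section RootCounts.

Variable F : finIdomainType.

Lemma card_roots_lt_size (p : {poly F}) (S : {set F}) :
  p != 0 -> {in S, forall x, root p x} -> (#|S| < size p)%N.
Proof.
move=> p_neq0 rootS; rewrite cardE; apply: max_poly_roots p_neq0 _ (enum_uniq _).
by apply/allP => x; rewrite mem_enum; apply: rootS.
Qed.

Lemma Poly_neq0 (s : seq F) (i : nat) : s`_i != 0 -> Poly s != 0.
Proof. by apply: contraNneq => s0; rewrite -coef_Poly s0 coef0. Qed.

Lemma card_linear_roots_le1 (A B : F) (S : {set F}) :
  (A != 0) || (B != 0) -> {in S, forall x, A * x + B = 0} -> (#|S| <= 1)%N.
Proof.
move=> AB rootS; rewrite -ltnS; apply: leq_trans _ (size_Poly [:: B; A]).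
apply: card_roots_lt_size => [|x /rootS E]; last first.
  by rewrite rootE horner_Poly; apply/eqP; rewrite -[RHS]E /=; ring.
by case/orP: AB => [A0|B0]; [exact: (@Poly_neq0 _ 1) | exact: (@Poly_neq0 _ 0)].
Qed.

Lemma card_quadratic_roots_le2 (A B C : F) (S : {set F}) :
  B != 0 -> {in S, forall x, A * x ^+ 2 + B * x + C = 0} -> (#|S| <= 2)%N.
Proof.
move=> B0 rootS; rewrite -ltnS; apply: leq_trans _ (size_Poly [:: C; B; A]).
apply: card_roots_lt_size => [|x /rootS E]; first exact: (@Poly_neq0 _ 1).
by rewrite rootE horner_Poly; apply/eqP; rewrite -[RHS]E /=; ring.
Qed.

End RootCounts.

Lemma distinct_solutions_sum (R : idomainType) (al be a c x1 x2 : R) : x1 != x2 ->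
  al * (x1 + a) ^+ 2 - be * x1 ^+ 2 = c -> al * (x2 + a) ^+ 2 - be * x2 ^+ 2 = c ->
  al * (x1 + x2 + 2 * a) = be * (x1 + x2).
Proof.
move=> x12 E1 E2; apply/eqP; rewrite -subr_eq0.
have : (x1 - x2) * (al * (x1 + x2 + 2 * a) - be * (x1 + x2)) =
       (al * (x1 + a) ^+ 2 - be * x1 ^+ 2) - (al * (x2 + a) ^+ 2 - be * x2 ^+ 2) by ring.
by rewrite E1 E2 subrr => /eqP; rewrite mulf_eq0 [x1 - x2 == 0]subr_eq0 (negbTE x12).
Qed.

Lemma cross_solutions_identity (R : comPzRingType) (al be a c x1 x2 y1 y2 z : R) :
  al * (x1 + a) ^+ 2 - be * x1 ^+ 2 = c -> al * (x1 + x2 + 2 * a) = be * (x1 + x2) ->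
  be * (y1 + a) ^+ 2 - al * y1 ^+ 2 = c -> be * (y1 + y2 + 2 * a) = al * (y1 + y2) ->
  al * (z + a) ^+ 2 - al * z ^+ 2 = c ->
  (al - be) * ((z + a) * x1 * x2 + z * ((y1 + a) * (y2 + a))) = 0.
Proof.
move=> Ex Sx Ey Sy Ez.
have -> : (al - be) * ((z + a) * x1 * x2 + z * ((y1 + a) * (y2 + a))) =
    (z + a) * (x1 * (al * (x1 + x2 + 2 * a) - be * (x1 + x2))
               - (al * (x1 + a) ^+ 2 - be * x1 ^+ 2 - c))
    + z * ((be * (y1 + a) ^+ 2 - al * y1 ^+ 2 - c)
           - y1 * (be * (y1 + y2 + 2 * a) - al * (y1 + y2)))
    - z * a * (be * (y1 + y2 + 2 * a) - al * (y1 + y2))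
    + a * (al * (z + a) ^+ 2 - al * z ^+ 2 - c) by ring.
by rewrite Ex Sx Ey Sy Ez !subrr; ring.
Qed.

Section DifferentialCount.

Variables (F : finFieldType) (m : nat) (h : {poly F}).

Let f : {poly F} := 'X^2 * (h \Po 'X^m).

Lemma horner_f (x : F) : f.[x] = x ^+ 2 * h.[x ^+ m].
Proof. by rewrite hornerM hornerXn horner_comp hornerXn. Qed.

Definition mu : {set F} := [set x ^+ m | x in [set~ 0]].

Lemma expm_mu (x : F) : x != 0 -> x ^+ m \in mu.
Proof. by move=> x0; apply: imset_f; rewrite !inE. Qed.

Lemma mu_neq0 (e : F) : e \in mu -> e != 0.
Proof. by case/imsetP => x; rewrite !inE => x0 ->; rewrite expf_neq0. Qed.

Lemma card_mu_le (d : nat) : (m * d)%N = #|F|.-1 -> (#|mu| <= d)%N.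
Proof.
move=> md; have d_gt0 : (0 < d)%N.
  case: d md => [|//]; rewrite muln0 => /esym/eqP.
  by rewrite -subn1 subn_eq0 leqNgt card_finNzRing_gt1.
have d_roots (e : F) : e \in mu -> root ('X^d - 1%:P) e.
  case/imsetP => x; rewrite !inE => x0 ->.
  have xq1 : x ^+ #|F|.-1 = 1.
    by apply: (mulfI x0); rewrite mulr1 -exprS prednK ?expf_card // ltnW ?card_finNzRing_gt1.
  by rewrite rootE !hornerE -exprM md xq1 subrr.
have := card_roots_lt_size (monic_neq0 (monicXnsubC 1 d_gt0)) d_roots.
by rewrite size_XnsubC.
Qed.

Lemma perm_poly_h_mu_neq0 : is_perm_poly f -> forall e, e \in mu -> h.[e] != 0.
Proof.
move=> f_inj e /imsetP [x]; rewrite !inE => x0 ->; apply: contra x0 => /eqP hx0.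
by apply/eqP/f_inj; rewrite /= !horner_f hx0 mulr0 expr0n mul0r.
Qed.

Hypothesis m_odd : odd m.

Lemma opp_mu (e : F) : e \in mu -> - e \in mu.
Proof.
by case/imsetP => x; rewrite !inE => x0 ->; rewrite -exprN_odd // expm_mu ?oppr_eq0.
Qed.

Lemma opp_muE (e : F) : (- e \in mu) = (e \in mu).
Proof. by apply/idP/idP => /opp_mu; rewrite ?opprK. Qed.

Lemma expm_mu_neq0 (x e : F) : e \in mu -> x ^+ m = e -> x != 0.
Proof.
move=> emu xe; apply: contraNneq (mu_neq0 emu) => x0.
by rewrite -xe x0 expr0n; case: m m_odd.
Qed.

Hypothesis two_neq0 : (2 : F) != 0.

Lemma mu_opp_neq (e : F) : e \in mu -> - e != e.
Proof.
move=> emu; apply: contraNneq (mu_neq0 emu) => /eqP; rewrite eq_sym -subr_eq0 opprK.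
by rewrite -mulr2n -mulr_natl mulf_eq0 (negbTE two_neq0).
Qed.

Variables (a c : F).
Hypotheses (a_neq0 : a != 0) (h_mu_neq0 : forall e, e \in mu -> h.[e] != 0).

Definition sols : {set F} := [set x | f.[x + a] - f.[x] == c].

Definition fiber (e1 e2 : F) : {set F} :=
  [set x in sols | ((x + a) ^+ m == e1) && (x ^+ m == e2)].

Lemma fiberP (e1 e2 x : F) : x \in fiber e1 e2 ->
  [/\ h.[e1] * (x + a) ^+ 2 - h.[e2] * x ^+ 2 = c, (x + a) ^+ m = e1 & x ^+ m = e2].
Proof.
rewrite !inE !horner_f => /andP [/eqP <- /andP [/eqP <- /eqP <-]].
by split; rewrite // ![h.[_] * _]mulrC.
Qed.

Lemma card_fiber_le2 (e1 e2 : F) : e1 \in mu -> (#|fiber e1 e2| <= 2)%N.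
Proof.
move=> e1mu; apply: (@card_quadratic_roots_le2 _ (h.[e1] - h.[e2]) (2 * a * h.[e1])
                      (h.[e1] * a ^+ 2 - c)).
  by rewrite !mulf_neq0 ?h_mu_neq0.
by move=> x /fiberP [<- _ _]; ring.
Qed.

Lemma card_fiber_diag_le1 (e : F) : e \in mu -> (#|fiber e e| <= 1)%N.
Proof.
move=> emu; apply: (@card_linear_roots_le1 _ (2 * a * h.[e]) (h.[e] * a ^+ 2 - c)).
  by rewrite !mulf_neq0 ?h_mu_neq0.
by move=> x /fiberP [<- _ _]; ring.
Qed.

Lemma fiber_diag_eq0_of_cross (e : F) : e \in mu ->
  #|fiber e (- e)| = 2%N -> #|fiber (- e) e| = 2%N -> fiber e e = set0.
Proof.
move=> emu /eqP/cards2P [x1 [x2 [x12 defx]]] /eqP/cards2P [y1 [y2 [y12 defy]]].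
apply/setP => z; rewrite in_set0; apply/negP => /fiberP [Ez ze1 ze2].
have /fiberP [Ex1 _ x1e] : x1 \in fiber e (- e) by rewrite defx set21.
have /fiberP [Ex2 _ x2e] : x2 \in fiber e (- e) by rewrite defx set22.
have /fiberP [Ey1 y1e _] : y1 \in fiber (- e) e by rewrite defy set21.
have /fiberP [Ey2 y2e _] : y2 \in fiber (- e) e by rewrite defy set22.
have Sx := distinct_solutions_sum x12 Ex1 Ex2.
have Sy := distinct_solutions_sum y12 Ey1 Ey2.
have he_neq : h.[e] != h.[- e].
  apply/eqP => he; have : 2 * a * h.[- e] = 0.
    by rewrite -[RHS](subrr (h.[- e] * (x1 + x2))) -{1}Sx he; ring.
  by apply/eqP; rewrite !mulf_neq0 ?h_mu_neq0 ?opp_mu.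
(* Hence (z+a) x1 x2 = - z (y1+a) (y2+a), whose two sides have m-th powers
   e^3 and -e^3. *)
have /eqP := cross_solutions_identity Ex1 Sx Ey1 Sy Ez.
rewrite mulf_eq0 subr_eq0 (negbTE he_neq) addr_eq0 => /eqP /(congr1 (fun u => u ^+ m)).
rewrite exprN_odd // !exprMn ze1 ze2 x1e x2e y1e y2e => /eqP.
rewrite -subr_eq0 opprK (_ : _ + _ = 2 * e ^+ 3); last by ring.
by rewrite mulf_eq0 (negbTE two_neq0) expf_eq0 (negbTE (mu_neq0 emu)) andbF.
Qed.

Definition block (e : F) : nat :=
  #|fiber e e| + #|fiber e (- e)| + #|fiber (- e) e| + #|fiber (- e) (- e)|.

Lemma blockN (e : F) : block (- e) = block e.
Proof. by rewrite /block opprK; lia. Qed.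

Lemma block_le5 (e : F) : e \in mu -> (block e <= 5)%N.
Proof.
move=> emu; have Nemu := opp_mu emu; rewrite /block.
have := card_fiber_le2 (- e) emu; have := card_fiber_le2 e Nemu.
have [/andP [/eqP c1 /eqP c2]|] :=
  boolP ((#|fiber e (- e)| == 2) && (#|fiber (- e) e| == 2)); last first.
  have := card_fiber_diag_le1 emu; have := card_fiber_diag_le1 Nemu; lia.
have Nc1 : #|fiber (- e) (- - e)| = 2%N by rewrite opprK.
have Nc2 : #|fiber (- - e) (- e)| = 2%N by rewrite opprK.
rewrite fiber_diag_eq0_of_cross // (fiber_diag_eq0_of_cross Nemu Nc1 Nc2) cards0; lia.
Qed.

Lemma c_of_sol0 : 0 \in sols -> c = h.[a ^+ m] * a ^+ 2.
Proof. by rewrite inE add0r !horner_f expr0n mul0r subr0 mulrC => /eqP. Qed.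

Lemma c_of_solNa : - a \in sols -> c = - (h.[- a ^+ m] * a ^+ 2).
Proof.
rewrite inE addNr !horner_f expr0n mul0r sub0r sqrrN exprN_odd // mulrC.
by move/eqP.
Qed.

Section EndpointBlock.

Let e := a ^+ m.
Let emu : e \in mu := expm_mu a_neq0.

Lemma fiber_diag_sol0 : 0 \in sols -> fiber e e = set0.
Proof.
move/c_of_sol0 => c_eq; apply/setP => x; rewrite in_set0; apply/negP => /fiberP [E _ xe].
have : 2 * a * h.[e] * x = 0 by rewrite -[RHS](subrr c) -{1}E c_eq; ring.
by apply/eqP; rewrite !mulf_neq0 ?h_mu_neq0 ?(expm_mu_neq0 emu xe).
Qed.

Lemma fiberN_diag_solNa : - a \in sols -> fiber (- e) (- e) = set0.
Proof.
move/c_of_solNa => c_eq; apply/setP => x; rewrite in_set0; apply/negP => /fiberP [E xe _].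
have : 2 * a * h.[- e] * (x + a) = 0 by rewrite -[RHS](subrr c) -{1}E c_eq; ring.
by apply/eqP; rewrite !mulf_neq0 ?h_mu_neq0 ?opp_mu ?(expm_mu_neq0 (opp_mu emu) xe).
Qed.

Lemma card_fiber_cross_ends :
  (0 \in sols) || (- a \in sols) -> (#|fiber e (- e)| <= 1)%N.
Proof.
case/orP => [/c_of_sol0|/c_of_solNa] c_eq.
  apply: (@card_linear_roots_le1 _ (h.[e] - h.[- e]) (2 * a * h.[e])).
    by rewrite !mulf_neq0 ?h_mu_neq0 ?orbT.
  move=> x /fiberP [E _ xe]; have x0 := expm_mu_neq0 (opp_mu emu) xe.
  have : x * ((h.[e] - h.[- e]) * x + 2 * a * h.[e]) = 0.
    by rewrite -[RHS](subrr c) -{1}E c_eq; ring.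
  by move/eqP; rewrite mulf_eq0 (negbTE x0) => /eqP.
apply: (@card_linear_roots_le1 _ (h.[e] - h.[- e]) ((h.[e] + h.[- e]) * a)).
  have [he|] := eqVneq (h.[e] - h.[- e]) 0; rewrite ?orTb //=.
  move/eqP: he; rewrite subr_eq0 => /eqP ->.
  by rewrite mulf_neq0 // -mulr2n -mulr_natl mulf_neq0 ?h_mu_neq0 ?opp_mu.
move=> x /fiberP [E xe _]; have xa0 := expm_mu_neq0 emu xe.
have : (x + a) * ((h.[e] - h.[- e]) * x + (h.[e] + h.[- e]) * a) = 0.
  by rewrite -[RHS](subrr c) -{1}E c_eq; ring.
by move/eqP; rewrite mulf_eq0 (negbTE xa0) => /eqP.
Qed.

Lemma fiber_cross_ends : 0 \in sols -> - a \in sols -> fiber e (- e) = set0.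
Proof.
move=> /c_of_sol0 c0 /c_of_solNa; rewrite c0 => /eqP; rewrite -subr_eq0 opprK -mulrDl.
rewrite mulf_eq0 expf_eq0 (negbTE a_neq0) andbF orbF addr_eq0 => /eqP hN.
apply/setP => x; rewrite in_set0; apply/negP => /fiberP [E xe1 xe2].
have : 2 * h.[e] * (x * (x + a)) = 0.
  by rewrite -[RHS](subrr c) -{1}E c0 hN; ring.
apply/eqP; rewrite !mulf_neq0 ?h_mu_neq0 ?(expm_mu_neq0 emu xe1) //.
exact: expm_mu_neq0 (opp_mu emu) xe2.
Qed.

Lemma block_ends : (block e + (0%R \in sols) + (- a \in sols) <= 5)%N.
Proof.
have := block_le5 emu; rewrite /block.
have := card_fiber_diag_le1 emu; have := card_fiber_diag_le1 (opp_mu emu).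
have := card_fiber_le2 (- e) emu; have := card_fiber_le2 e (opp_mu emu).
have := @card_fiber_cross_ends.
case s0 : (0 \in sols); case s1 : (- a \in sols) => /=.
- rewrite fiber_diag_sol0 // fiberN_diag_solNa // fiber_cross_ends // cards0; lia.
- rewrite fiber_diag_sol0 // cards0; lia.
- rewrite fiberN_diag_solNa // cards0; lia.
- lia.
Qed.

End EndpointBlock.

Lemma card_sols_le : (#|sols| <= (0%R \in sols) + (- a \in sols) +
  \sum_(e1 in mu) \sum_(e2 in mu) #|fiber e1 e2|)%N.
Proof.
have sols_sub : sols :\ 0 :\ - a \subset \bigcup_(e1 in mu) \bigcup_(e2 in mu) fiber e1 e2.
  apply/subsetP => x; rewrite !in_setD1 => /and3P [xa x0 xsol].
  have xa0 : x + a != 0 by rewrite addr_eq0.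
  apply/bigcupP; exists ((x + a) ^+ m); first exact: expm_mu.
  by apply/bigcupP; exists (x ^+ m); rewrite ?expm_mu // inE xsol !eqxx.
rewrite (cardsD1 0) (cardsD1 (- a)) in_setD1 oppr_eq0 (negbTE a_neq0) /=.
rewrite addnA leq_add2l; apply: leq_trans (subset_leq_card sols_sub) _.
apply: (leq_trans (card_bigcup_le _ _)); apply: leq_sum => e1 _; exact: card_bigcup_le.
Qed.

Lemma row_sum_le (e1 : F) : e1 \in mu ->
  (\sum_(e2 in mu) #|fiber e1 e2| + 4 <= #|fiber e1 e1| + #|fiber e1 (- e1)| + 2 * #|mu|)%N.
Proof.
move=> e1mu; have Ne1 : - e1 \in mu :\ e1 by rewrite in_setD1 mu_opp_neq ?opp_mu.
have card_mu : #|mu| = (#|mu :\ e1 :\ - e1|).+2.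
  by rewrite (cardsD1 e1) e1mu (cardsD1 (- e1) (mu :\ e1)) Ne1.
rewrite (big_setD1 e1) // (big_setD1 (- e1)) //= card_mu.
set rest := (\sum_(i in _) _)%N.
have : (rest <= #|mu :\ e1 :\ - e1| * 2)%N.
  by rewrite -sum_nat_const; apply: leq_sum => e2 _; exact: card_fiber_le2.
lia.
Qed.

Lemma sum_block_le :
  (\sum_(e in mu) block e + 2 * ((0%R \in sols) + (- a \in sols)) <= 5 * #|mu|)%N.
Proof.
have emu := expm_mu a_neq0.
have Nemu : - a ^+ m \in mu :\ a ^+ m by rewrite in_setD1 mu_opp_neq ?opp_mu.
have card_mu : #|mu| = (#|mu :\ a ^+ m :\ - a ^+ m|).+2.
  by rewrite (cardsD1 (a ^+ m)) emu (cardsD1 (- a ^+ m) (mu :\ a ^+ m)) Nemu.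
rewrite (big_setD1 (a ^+ m)) // (big_setD1 (- a ^+ m)) //= blockN card_mu.
set rest := (\sum_(i in _) _)%N.
have : (rest <= #|mu :\ a ^+ m :\ - a ^+ m| * 5)%N.
  rewrite -sum_nat_const; apply: leq_sum => e.
  by rewrite !in_setD1 => /and3P [_ _ /block_le5].
have := block_ends; lia.
Qed.

Lemma sum_block_double :
  (\sum_(e in mu) block e = 2 * \sum_(e in mu) (#|fiber e e| + #|fiber e (- e)|))%N.
Proof.
have reflect_sum : (\sum_(e in mu) (#|fiber (- e) (- e)| + #|fiber (- e) e|) =
                    \sum_(e in mu) (#|fiber e e| + #|fiber e (- e)|))%N.
  rewrite (reindex_inj oppr_inj) /=; apply: eq_big => [e|e _]; first exact: opp_muE.
  by rewrite opprK.
rewrite mul2n -addnn -{1}reflect_sum -big_split /=.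
apply: eq_bigr => e _; rewrite /block /=; lia.
Qed.

Lemma card_sols_bound : (2 * #|sols| + 3 * #|mu| <= 4 * #|mu| ^ 2)%N.
Proof.
have rows : (\sum_(e1 in mu) (\sum_(e2 in mu) #|fiber e1 e2| + 4) <=
   \sum_(e1 in mu) (#|fiber e1 e1| + #|fiber e1 (- e1)| + 2 * #|mu|))%N.
  by apply: leq_sum => e1; apply: row_sum_le.
move: rows; rewrite !big_split /= !sum_nat_const.
have := card_sols_le; have := sum_block_le; rewrite sum_block_double big_split /=; nia.
Qed.

End DifferentialCount.

Lemma leq_4sqr_sub_3 (k d : nat) : (k <= d)%N -> (4 * k ^ 2 + 3 * d <= 4 * d ^ 2 + 3 * k)%N.
Proof.
move=> kd; have [t ->] : exists t, d = (k + t)%N by exists (d - k)%N; rewrite subnKC.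
nia.
Qed.

Theorem theorem1p4 (F : finFieldType) (d : nat) (h : {poly F}) :
  odd #|F| ->
  ~~ odd d ->
  (d %| #|F|.-1)%N ->
  odd (#|F|.-1 %/ d)%N ->
  is_perm_poly ('X^2 * (h \Po 'X^(#|F|.-1 %/ d))) ->
  (2 * diff_unif ('X^2 * (h \Po 'X^(#|F|.-1 %/ d))) <= 4 * d ^ 2 - 3 * d)%N.
Proof.
(* [~~ odd d] is implied by the other hypotheses, as q - 1 is even and m is odd. *)
move=> oddF _ d_dvd m_odd f_perm; set m := (#|F|.-1 %/ d)%N in m_odd f_perm *.
have mu_le : (#|mu F m| <= d)%N := card_mu_le (divnK d_dvd).
have h_mu := perm_poly_h_mu_neq0 f_perm.
have two_neq0 := odd_card_two_neq0 oddF.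
rewrite /diff_unif; elim/big_ind: _ => [|x y|a a_neq0]; [by [] | lia |].
elim/big_ind: _ => [|x y|c _]; [by [] | lia |].
have := card_sols_bound m_odd two_neq0 c a_neq0 h_mu; have := leq_4sqr_sub_3 mu_le.
change (diff_count _ a c) with #|sols m h a c|; lia.
Qed.
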